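(* Let $n\ge 3$ and w.l.o.g. $n$ odd, let $R=\{x_1,\dots,x_n\}$ with $x_i\in[0,B]$ for $B\in\mathbb{R}$, and $m=\frac{n+1}{2}$ so that $x_{(m)}=\mathrm{median}(R)$ (where $x_{(1)}\le\dots\le x_{(n)}$ are the sorted values). Then $$\mathrm{RS}_{\mathrm{median}}(R)=\tfrac12\max\{x_{(m+1)}-x_{(m)},\,x_{(m)}-x_{(m-1)}\}.$$
   Context: For a finite multiset of reals with sorted values $x_{(1)}\le\dots\le x_{(k)}$, $\mathrm{median}=x_{(\lceil k/2\rceil)}$ for odd $k$ and $\frac{x_{(k/2)}+x_{(k/2+1)}}{2}$ for even $k$. The retain sensitivity is $\mathrm{RS}_{\mathrm{median}}(R)=\max_{x\in[0,B]}|\mathrm{median}(R\cup\{x\})-\mathrm{median}(R)|$. *)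

From HB Require Import structures.
From mathcomp Require Import all_boot all_order all_algebra.
From mathcomp Require Import classical_sets reals.
Set Implicit Arguments. Unset Strict Implicit. Unset Printing Implicit Defensive.
Import Order.TTheory GRing.Theory Num.Theory.
Local Open Scope ring_scope.
Local Open Scope classical_set_scope.

(* sorted values x_(1) <= ... <= x_(k) of a finite multiset (a seq);
   [order_stat s i] is x_(i) (1-indexed). *)
Definition order_stat (R : realType) (s : seq R) (i : nat) : R :=
  nth 0 (sort <=%R s) i.-1.

Definition median (R : realType) (s : seq R) : R :=
  let k := size s in
  if odd k then order_stat s (uphalf k)
  else (order_stat s k./2 + order_stat s k./2.+1) / 2.

(* retain sensitivity: max over x in [0,B] of |median(R ∪ {x}) - median(R)|,
   expressed as the supremum of the set of these values *)
Definition RS_median (R : realType) (B : R) (s : seq R) : R :=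
  sup [set `|median (x :: s) - median s| | x in [set x : R | 0 <= x <= B]].

From mathcomp Require Import all_boot all_order all_algebra.
From mathcomp Require Import classical_sets reals.
From mathcomp Require Import lra zify.
Import Order.TTheory GRing.Theory Num.Theory.
Set Implicit Arguments. Unset Strict Implicit. Unset Printing Implicit Defensive.

(* Let t be the sorted sample, of odd length 2k+1, so that its median is t_k.
   Inserting x into t puts at position j the value x clamped to
   [t_(j-1), t_j]; hence the two middle entries of the extended sample add up
   to t_k plus x clamped to [t_(k-1), t_(k+1)], and the median moves by half
   the distance from that clamped value to t_k.  This is at most
   max (t_(k+1) - t_k) (t_k - t_(k-1)) / 2, with equality at x = t_(k+1) or
   x = t_(k-1), both of which lie in [0, B]. *)

Section SortedInsertion.
Local Open Scope order_scope.
Variables (d : Order.disp_t) (T : orderType d) (x0 : T).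

Lemma sorted_nth_mono t p q : sorted <=%O t -> (p <= q < size t)%N ->
  nth x0 t p <= nth x0 t q.
Proof.
move=> st /andP[pq qt]; apply: le_sorted_leq_nth => //.
by rewrite inE (leq_ltn_trans pq).
Qed.

Lemma sort_nth_mono s p q : (p <= q < size s)%N ->
  nth x0 (sort <=%O s) p <= nth x0 (sort <=%O s) q.
Proof. by rewrite -(size_sort <=%O); apply/sorted_nth_mono/sort_le_sorted. Qed.

Lemma sort_cons (x : T) s :
  sort <=%O (x :: s) = merge <=%O [:: x] (sort <=%O s).
Proof.
rewrite -[RHS]sort_le_id.
  by apply/perm_sort_leP; rewrite perm_sym perm_merge /= perm_cons perm_sort.
exact: (merge_sorted le_total (isT : sorted <=%O [:: x]) (sort_le_sorted s)).
Qed.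

Lemma merge1_split (x : T) t : exists i, [/\
  merge <=%O [:: x] t = take i t ++ x :: drop i t, (i <= size t)%N,
  (0 < i)%N -> nth x0 t i.-1 < x & (i < size t)%N -> x <= nth x0 t i].
Proof.
elim: t => [|y t [i [Ei i_t lt_x le_x]]]; first by exists 0%N.
have -> : merge <=%O [:: x] (y :: t) =
    if x <= y then [:: x, y & t] else y :: merge <=%O [:: x] t by [].
have [xy|yx] := leP x y; first by exists 0%N; rewrite take0 drop0.
by exists i.+1; rewrite Ei; split=> //; case: i {Ei i_t le_x} lt_x => //= i ->.
Qed.

Definition clamp (a b x : T) := Order.max a (Order.min x b).

Lemma clamp_l a b x : x <= a -> a <= b -> clamp a b x = a.
Proof. by move=> xa ab; rewrite /clamp min_l ?max_l // (le_trans xa). Qed.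

Lemma clamp_id a b x : a <= x -> x <= b -> clamp a b x = x.
Proof. by move=> ax xb; rewrite /clamp min_l ?max_r. Qed.

Lemma clamp_r a b x : b <= x -> a <= b -> clamp a b x = b.
Proof. by move=> bx ab; rewrite /clamp min_r ?max_r. Qed.

Lemma clamp_bounded a b x : a <= b -> a <= clamp a b x <= b.
Proof. by move=> ab; rewrite /clamp le_max lexx ge_max ab ge_min lexx orbT. Qed.

Lemma nth_merge1 (x : T) t j : sorted <=%O t -> (0 < j < size t)%N ->
  nth x0 (merge <=%O [:: x] t) j = clamp (nth x0 t j.-1) (nth x0 t j) x.
Proof.
move=> st /andP[j0 jt]; have [i [-> i_t lt_x le_x]] := merge1_split x t.
have le_t p q : (p <= q < size t)%N -> nth x0 t p <= nth x0 t q.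
  exact: sorted_nth_mono.
rewrite nth_cat size_takel //; case: (ltngtP j i) => [ji|ij|ji].
- rewrite nth_take // clamp_r //; last by apply: le_t; lia.
  by apply/ltW/(le_lt_trans _ (lt_x _)); [apply: le_t | ]; lia.
- case E: (j - i)%N => [|k] /=; first lia.
  rewrite nth_drop (_ : i + k = j.-1)%N; last lia.
  rewrite clamp_l //; last by apply: le_t; lia.
  by apply: le_trans (le_x _) (le_t _ _ _); lia.
- by subst i; rewrite subnn /= clamp_id ?(ltW (lt_x j0)) ?le_x.
Qed.

End SortedInsertion.

Local Open Scope ring_scope.

Lemma clamp_split (R : realDomainType) (a b c x : R) : a <= b -> b <= c ->
  clamp a b x + clamp b c x = clamp a c x + b.
Proof.
move=> ab bc; have [xb|bx] := leP x b.
  rewrite (clamp_l xb bc); congr (_ + _).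
  by rewrite /clamp !min_l // (le_trans xb bc).
rewrite (clamp_r (ltW bx) ab) addrC; congr (_ + _).
have bm : b <= Num.min x c by rewrite le_min (ltW bx) bc.
by rewrite /clamp !max_r // (le_trans ab bm).
Qed.

Lemma norm_clamp_sub_le (R : realDomainType) (a b c x : R) : a <= b -> b <= c ->
  `|clamp a c x - b| <= Num.max (c - b) (b - a).
Proof.
move=> ab bc; have /andP[] := clamp_bounded x (le_trans ab bc).
have [] := leP (b - a) (c - b); rewrite ler_norml => *; apply/andP; split; lra.
Qed.

Lemma sup_eq_mem_ubound (R : realType) (E : set R) M :
  E M -> ubound E M -> sup E = M.
Proof.
move=> EM ubM; apply/le_anti/andP; split; first by apply: ge_sup; first exists M.
by apply: ub_le_sup => //; exists M.
Qed.

Section MedianInsertion.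
Variables (R : realType) (s : seq R) (k : nat).
Hypothesis size_s : size s = k.*2.+1.
Let t := sort <=%R s.

Lemma median_odd : median s = nth 0 t k.
Proof. by rewrite /median size_s /= odd_double /= doubleK. Qed.

Lemma median_cons_sub x : (0 < k)%N ->
  median (x :: s) - median s =
  (clamp (nth 0 t k.-1) (nth 0 t k.+1) x - nth 0 t k) / 2.
Proof.
move=> k0; have size_t : size t = k.*2.+1 by rewrite size_sort.
rewrite median_odd /median /= size_s /= odd_double /order_stat /= doubleK.
rewrite sort_cons -/t !nth_merge1 ?size_t ?sort_le_sorted; [|lia..].
rewrite clamp_split ?sort_nth_mono ?size_s; [lra|lia..].
Qed.

End MedianInsertion.

Theorem mainTheorem5 (R : realType) (B : R) (n : nat) (s : seq R) :
  (3 <= n)%N -> odd n -> size s = n ->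
  (forall x, x \in s -> 0 <= x <= B) ->
  let m := (n.+1 %/ 2)%N in
  RS_median B s =
    (Num.max (order_stat s m.+1 - order_stat s m)
             (order_stat s m - order_stat s m.-1)) / 2.
Proof.
move=> n3 odd_n size_s s_in m.
set k := n./2; have n_k : n = k.*2.+1 by rewrite -[n]odd_double_half odd_n.
have -> : m = k.+1 by rewrite /m n_k; lia.
rewrite n_k in size_s n3; have k0 : (0 < k)%N by lia.
rewrite /order_stat /=; set t := sort <=%R s.
have t_in j : (j < k.*2.+1)%N -> 0 <= nth 0 t j <= B.
  by move=> jk; apply: s_in; rewrite -(mem_sort <=%R) mem_nth ?size_sort ?size_s.
set a := nth 0 t k.-1; set b := nth 0 t k; set c := nth 0 t k.+1.
have ab : a <= b by apply: sort_nth_mono; rewrite size_s; lia.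
have bc : b <= c by apply: sort_nth_mono; rewrite size_s; lia.
have med_x x : median (x :: s) - median s = (clamp a c x - b) / 2.
  exact: median_cons_sub.
apply: sup_eq_mem_ubound => [|_ [x _ <-]]; last first.
  rewrite med_x normrM [`|_^-1|]ger0_norm ?invr_ge0 //.
  by rewrite ler_wpM2r ?invr_ge0 ?norm_clamp_sub_le.
have [ba_cb|cb_ba] := leP (b - a) (c - b).
  exists c; first by apply: t_in; lia.
  rewrite med_x clamp_r ?(le_trans ab bc) //.
  by rewrite ger0_norm // divr_ge0 // subr_ge0.
exists a; first by apply: t_in; lia.
rewrite med_x clamp_l ?(le_trans ab bc) //.
by rewrite -normrN -mulNr opprB ger0_norm // divr_ge0 // subr_ge0.
Qed.
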